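(* Let $c\in[0,1]$. For every countable collection of languages $\mathcal{L}$, there is a set-based generator that generates in the limit from $\mathcal{L}$ and achieves set-based upper density at least $1-c$ under enumerations without noise and with $c$-omissions.
   Context: The universe is $U=\mathbb{N}$ with its natural order. A language is an infinite subset of $U$; a collection is a countable family of languages. For $A,B\subseteq\mathbb{N}$ with $B=\{b_1<b_2<\cdots\}$, $\mu_{\rm low}(A,B)=\liminf_n\frac1n|A\cap\{b_1,\dots,b_n\}|$. An enumeration of $K$ without noise and with $c$-omissions is a sequence listing each element of some $\hat K\subseteq K$ exactly once and nothing else, where $\mu_{\rm low}(\hat K,K)\ge1-c$; $S_n=\{x_1,\dots,x_n\}$. A set-based generator outputs at step $n$, from $x_1,\dots,x_n$ and knowledge of $\mathcal{L}$ (not $K$), a set $A_n\subseteq U\setminus S_n$. It generates in the limit if for every $K\in\mathcal{L}$ and admissible enumeration there is $n^\star$ with $A_n\subseteq K$ for all $n\ge n^\star$; it achieves set-based upper density $\rho$ if $\limsup_n\mu_{\rm low}(A_n,K)\ge\rho$. *)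

From HB Require Import structures.
From mathcomp Require Import all_boot all_order all_algebra.
From mathcomp Require Import all_classical all_reals all_analysis.
Set Implicit Arguments. Unset Strict Implicit. Unset Printing Implicit Defensive.
Import Order.TTheory GRing.Theory Num.Theory.
Local Open Scope classical_set_scope.
Local Open Scope ring_scope.

(* The universe U is nat; subsets are [set nat]. *)

Definition language (K : set nat) : Prop := infinite_set K.

Definition collection (C : set (set nat)) : Prop :=
  countable C /\ (forall K, C K -> language K).

Definition cnt (P : set nat) (m : nat) : nat := \sum_(k < m) `[< P k >].

(* nth_elem B n = b_{n+1}, the (n+1)-th smallest element of B (0-indexed):
   the element of B having exactly n elements of B below it. *)
Definition nth_elem (B : set nat) (n : nat) : nat :=
  xget 0%N [set m | B m /\ cnt B m = n].

(* |A ∩ {b_1,...,b_n}| / n ; note {b_1..b_n} = B ∩ [0, b_{n+1}) *)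
Definition dens_ratio {R : realType} (A B : set nat) (n : nat) : R :=
  (cnt (A `&` B) (nth_elem B n))%:R / n%:R.

Definition mu_low {R : realType} (A B : set nat) : \bar R :=
  limn_einf (fun n => ((dens_ratio A B n : R))%:E).

(* S_n = {x_1,...,x_n} as a list (x is 0-indexed: x_1 = x 0) *)
Definition prefix (x : nat -> nat) (n : nat) : seq nat := [seq x i | i <- iota 0 n].

(* enumeration of K without noise and with c-omissions: an (infinite) sequence
   listing each element of some Khat ⊆ K exactly once and nothing else,
   with mu_low(Khat, K) >= 1 - c *)
Definition admissible_enum {R : realType} (c : R) (K : set nat) (x : nat -> nat) : Prop :=
  exists Khat : set nat,
    Khat `<=` K /\
    (forall i j, x i = x j -> i = j) /\
    (forall i, Khat (x i)) /\
    (forall y, Khat y -> exists i, x i = y) /\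
    ((1 - c)%:E <= mu_low Khat K)%E.

Definition set_generator (G : seq nat -> set nat) : Prop :=
  forall s : seq nat, forall y, G s y -> y \notin s.

Definition gen_out (G : seq nat -> set nat) (x : nat -> nat) (n : nat) : set nat :=
  G (prefix x n).

Definition generates_in_limit {R : realType} (c : R) (C : set (set nat))
    (G : seq nat -> set nat) : Prop :=
  forall K, C K -> forall x, admissible_enum c K x ->
    exists nstar, forall n, (nstar <= n)%N -> (0 < n)%N -> gen_out G x n `<=` K.

Definition achieves_upper_density {R : realType} (c rho : R) (C : set (set nat))
    (G : seq nat -> set nat) : Prop :=
  forall K, C K -> forall x, admissible_enum c K x ->
    (rho%:E <= limn_esup (fun n => mu_low (gen_out G x n.+1) K))%E.

From Pilot Require Import Defs.
From HB Require Import structures.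
From mathcomp Require Import all_boot all_order all_algebra.
From mathcomp Require Import all_classical all_reals all_analysis.
From mathcomp Require Import lra zify.
Import Order.TTheory GRing.Theory Num.Theory.
Set Implicit Arguments.
Unset Strict Implicit.
Unset Printing Implicit Defensive.
Local Open Scope classical_set_scope.

(** Enumerate the collection as [L 0], [L 1], ... .  After reading the sample
    [S_n] the generator keeps a level [w_n] and outputs the unseen elements
    common to all [L i], [i < w_n], that are consistent with [S_n].  The level
    grows by one at each step, except that when the new sample point refutes
    some consistent [L i] with [i <= w_n] it drops to the least such [i].
    Each language is refuted at most once, so eventually [w_n] exceeds the
    index of the target [K] and the output lies in [K].  Conversely, when the
    least [j] that is consistent at time [N] but misses some [x m] gets
    refuted, the level drops to at most [j]; hence infinitely often every
    consistent [L i] below the level contains the whole enumeration, and then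
    [A_n] contains all of [Khat] except the finitely many points of [S_n]. *)

Section LiminfBounds.
Context {R : realType}.
Local Open Scope ring_scope.
Implicit Types (u v w : R^nat) (a : R).

Lemma limn_einf_ge_near u a e : 0 < e ->
  (a%:E <= limn_einf (EFin \o u))%E -> \forall n \near \oo, a - e < u n.
Proof.
move=> e0; rewrite limn_einf_lim.
have -> : limn (einfs (EFin \o u)) = ereal_sup (range (einfs (EFin \o u))).
  by apply/cvg_lim => //; exact: cvg_einfs_sup.
move=> ale.
have /ereal_sup_gt [_ [N _ <-] ltN] :
    ((a - e)%:E < ereal_sup (range (einfs (EFin \o u))))%E.
  by apply: lt_le_trans ale; rewrite lte_fin ltrBlDr ltrDl.
exists N => // n /= Nn; rewrite -lte_fin; apply: lt_le_trans ltN _.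
by apply: ereal_inf_lbound; exists n.
Qed.

Lemma near_ge_limn_einf u a :
  (forall e, 0 < e -> \forall n \near \oo, a - e <= u n) ->
  (a%:E <= limn_einf (EFin \o u))%E.
Proof.
move=> ev; apply/lee_subgt0Pr => e /ev [N _ HN].
rewrite limn_einf_lim; apply: lime_ge; first exact: is_cvg_einfs.
exists N => // k /= Nk; apply: le_ereal_inf_tmp => _ [n /= kn <-].
by rewrite -EFinB lee_fin; apply: HN; apply: leq_trans kn.
Qed.

Lemma limn_einf_ge_vanishing u v w a : w @ \oo --> 0 ->
  (forall n, v n <= u n + w n) ->
  (a%:E <= limn_einf (EFin \o v))%E -> (a%:E <= limn_einf (EFin \o u))%E.
Proof.
move=> w0 vuw av; apply: near_ge_limn_einf => e e0.
have e20 : 0 < e / 2 by rewrite divr_gt0.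
near=> n.
have : a - e / 2 < v n by near: n; exact: limn_einf_ge_near.
have : w n < e / 2 by near: n; exact: (cvgr_lt _ w0 _ e20).
by have := vuw n; lra.
Unshelve. all: by end_near. Qed.

Lemma cvg_divn (b : R) : (fun n => b / n%:R) @ \oo --> 0.
Proof.
rewrite -(mulr0 b); apply: cvgMr.
apply/gtr0_cvgV0; last exact: cvgr_idn.
by near=> n; rewrite ltr0n; near: n; exact: nbhs_infty_gt.
Unshelve. all: by end_near. Qed.

Lemma limn_esup_ge_often (u : (\bar R)^nat) (a : \bar R) :
  (forall N, exists2 n, (N <= n)%N & (a <= u n)%E) -> (a <= limn_esup u)%E.
Proof.
move=> often; rewrite limn_esup_lim; apply: lime_ge; first exact: is_cvg_esups.
apply: nearW => N; have [n Nn aun] := often N.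
by apply: le_trans aun _; apply: ereal_sup_ubound; exists n.
Qed.

End LiminfBounds.

Lemma cnt_count (P : set nat) m :
  cnt P m = count (fun k => `[< P k >]) (iota 0 m).
Proof.
by rewrite /cnt -(big_mkord xpredT (fun k => nat_of_bool `[< P k >]))
  -sumn_count sumnE big_map /index_iota subn0.
Qed.

Lemma le_cnt (P Q : set nat) m : P `<=` Q -> cnt P m <= cnt Q m.
Proof.
move=> PQ; rewrite !cnt_count; apply: sub_count => k /asboolP Pk.
exact/asboolP/PQ.
Qed.

Lemma cnt_setU (P Q : set nat) m : cnt (P `|` Q) m <= cnt P m + cnt Q m.
Proof.
rewrite /cnt -big_split /=; apply: leq_sum => k _.
by case: asboolP => [[Pk|Qk]|//]; [rewrite asboolT | rewrite addnC asboolT].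
Qed.

Lemma cnt_seq_le (s : seq nat) m : cnt [set` s] m <= size s.
Proof.
rewrite cnt_count -size_filter; apply: uniq_leq_size.
  exact/filter_uniq/iota_uniq.
by move=> k; rewrite mem_filter => /andP[/asboolP].
Qed.

Section Density.
Context {R : realType}.
Local Open Scope ring_scope.

Lemma dens_ratio_le_cover (A B K : set nat) (s : seq nat) n :
  B `<=` A `|` [set` s] ->
  dens_ratio B K n <= dens_ratio A K n + (size s)%:R / n%:R :> R.
Proof.
move=> BAs; rewrite /dens_ratio -mulrDl ler_wpM2r ?invr_ge0 ?ler0n //.
rewrite -natrD ler_nat; set m := nth_elem K n.
have sub : B `&` K `<=` (A `&` K) `|` [set` s].
  by move=> y [/BAs [Ay|sy] Ky]; [left | right].
have := le_cnt m sub; have := cnt_setU (A `&` K) [set` s] m.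
have := cnt_seq_le s m; lia.
Qed.

Lemma mu_low_ge_cover (A B K : set nat) (s : seq nat) (a : R) :
  B `<=` A `|` [set` s] ->
  (a%:E <= mu_low B K)%E -> (a%:E <= mu_low A K)%E.
Proof.
move=> BAs; apply: limn_einf_ge_vanishing (cvg_divn (size s)%:R) _ => n.
exact: dens_ratio_le_cover.
Qed.

End Density.

Lemma ex_least {P : nat -> Prop} :
  (exists n, P n) -> exists n, P n /\ forall k, k < n -> ~ P k.
Proof.
move=> [n0 Pn0]; have exP : exists n, `[< P n >] by exists n0; exact/asboolP.
case: (ex_minnP exP) => n /asboolP Pn minn; exists n; split => // k kn /asboolP.
by move=> /minn; rewrite leqNgt kn.
Qed.

Lemma eventually_gt_of_steps (w : nat -> nat) z :
  (\forall n \near \oo, w n.+1 = (w n).+1 \/ z < w n.+1) ->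
  \forall n \near \oo, z < w n.
Proof.
move=> [T _ step].
have grow d : minn z.+1 d <= w (T + d).
  elim: d => [|d IH]; first by rewrite minn0.
  by rewrite addnS; case: (step (T + d) (leq_addr _ _)) => [->|]; lia.
exists (T + z.+1) => // n /= Tn; have := grow (n - T); rewrite subnKC; lia.
Qed.

Local Notation sample := Defs.prefix.

Lemma sampleS (x : nat -> nat) n : sample x n.+1 = rcons (sample x n) (x n).
Proof. by rewrite /Defs.prefix -addn1 iotaD map_cat cats1. Qed.

Lemma sampleP (x : nat -> nat) n y :
  reflect (exists2 m, m < n & x m = y) (y \in sample x n).
Proof.
apply: (iffP mapP) => [[m]|[m mn <-]].
  by rewrite mem_iota => mn ->; exists m.
by exists m; rewrite // mem_iota.
Qed.

Section Generator.
Variable L : nat -> set nat.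

Definition consistent (i : nat) (s : seq nat) : Prop :=
  forall y, y \in s -> L i y.

Definition refutes (s : seq nat) (y i : nat) : bool :=
  `[< consistent i s /\ ~ L i y >].

Definition next_level (s : seq nat) (y k : nat) : nat :=
  find (refutes s y) (iota 0 k.+1).

Fixpoint level_rev (r : seq nat) : nat :=
  if r is y :: r' then next_level (rev r') y (level_rev r') else 0.

Definition level (s : seq nat) : nat := level_rev (rev s).

Definition generator (s : seq nat) : set nat :=
  [set y | y \notin s /\ forall i, i < level s -> consistent i s -> L i y].

Lemma generator_fresh : set_generator generator.
Proof. by move=> s y []. Qed.

Lemma level_rcons s y : level (rcons s y) = next_level s y (level s).
Proof. by rewrite /level rev_rcons /= revK. Qed.

Lemma next_levelP s y k :
  next_level s y k = k.+1 \/ refutes s y (next_level s y k).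
Proof.
rewrite /next_level; set j := find _ _.
have := find_size (refutes s y) (iota 0 k.+1); rewrite size_iota leq_eqVlt.
case/orP => [/eqP|lt]; [by left | right].
have hs : has (refutes s y) (iota 0 k.+1) by rewrite has_find size_iota.
by have := nth_find 0 hs; rewrite nth_iota.
Qed.

Lemma next_level_le s y k i : i <= k -> refutes s y i -> next_level s y k <= i.
Proof.
move=> ik ri; rewrite leqNgt; apply/negP => /(before_find 0).
by rewrite nth_iota // ri.
Qed.

Section Enumeration.
Variable x : nat -> nat.
Local Notation w n := (level (sample x n)).

Lemma consistent_sampleP i n :
  consistent i (sample x n) <-> forall m, m < n -> L i (x m).
Proof.
split => [ci m mn|ci y /sampleP [m mn <-]]; last exact: ci.
by apply: ci; apply/sampleP; exists m.
Qed.

Lemma consistent_sample_le i m n :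
  m <= n -> consistent i (sample x n) -> consistent i (sample x m).
Proof.
move=> mn /consistent_sampleP ci; apply/consistent_sampleP => k km.
by apply: ci; apply: leq_trans mn.
Qed.

Lemma levelS n : w n.+1 = next_level (sample x n) (x n) (w n).
Proof. by rewrite sampleS level_rcons. Qed.

Lemma refutes_eventually_never i :
  \forall n \near \oo, ~~ refutes (sample x n) (x n) i.
Proof.
have [[m /asboolP [_ Lxm]]|never] :=
  pselect (exists m, refutes (sample x m) (x m) i).
  near=> n; apply/negP => /asboolP [/consistent_sampleP cn _]; apply: Lxm.
  by apply: cn; near: n; exact: nbhs_infty_gt.
by apply: nearW => n; apply/negP => rn; apply: never; exists n.
Unshelve. all: by end_near. Qed.

Lemma level_eventually_gt z : \forall n \near \oo, z < w n.
Proof.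
apply: eventually_gt_of_steps.
have none : \forall n \near \oo,
    forall i : 'I_z.+1, ~~ refutes (sample x n) (x n) i.
  by apply: filter_forall => i; exact: refutes_eventually_never.
near=> n.
have unrefuted : forall i : 'I_z.+1, ~~ refutes (sample x n) (x n) i.
  by near: n.
rewrite levelS; case: (next_levelP (sample x n) (x n) (w n)) => [->|r].
  by left.
right; rewrite ltnNge; apply/negP; rewrite -ltnS => le.
by have /negP := unrefuted (Ordinal le).
Unshelve. all: by end_near. Qed.

Lemma generator_sub z n : z < w n -> (forall m, L z (x m)) ->
  generator (sample x n) `<=` L z.
Proof.
move=> zw Lz y [_ gen]; apply: gen zw _.
by apply/consistent_sampleP => m _; exact: Lz.
Qed.

Lemma level_le_refuted j m : refutes (sample x m) (x m) j ->
  exists2 n, m <= n & w n <= j.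
Proof.
move=> rj; case: (leqP (w m) j) => [wj | jw]; first by exists m.
by exists m.+1 => //; rewrite levelS; exact: next_level_le (ltnW jw) rj.
Qed.

Lemma level_consistent_often N : exists2 n, N <= n &
  forall i, i < w n -> consistent i (sample x n) -> forall m, L i (x m).
Proof.
have [bad|none] := pselect (exists j,
    consistent j (sample x N) /\ ~ forall m, L j (x m)); last first.
  exists N => // i _ ci; apply: contrapT => nLi; apply: none; exists i.
  exact: (conj ci).
have [j [[cj nLj] minj]] := ex_least bad.
have [m [nLm minm]] : exists m, ~ L j (x m) /\ forall k, k < m -> ~ ~ L j (x k).
  apply: ex_least; apply: contrapT => allL; apply: nLj => m.
  by apply: contrapT => nLm; apply: allL; exists m.
have Nm : N <= m.
  rewrite leqNgt; apply/negP => mN; apply: nLm.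
  exact: (consistent_sampleP _ _).1 cj m mN.
have rj : refutes (sample x m) (x m) j.
  apply/asboolP; split => //; apply/consistent_sampleP => k km.
  exact: contrapT (minm k km).
have [n mn wn] := level_le_refuted rj.
exists n => [|i iw ci]; first exact: leq_trans mn.
have ciN := consistent_sample_le (leq_trans Nm mn) ci.
apply: contrapT => nLi; apply: (minj i (leq_trans iw wn)); exact: (conj ciN).
Qed.

Lemma generator_covers n :
  (forall i, i < w n -> consistent i (sample x n) -> forall m, L i (x m)) ->
  range x `<=` generator (sample x n) `|` [set` sample x n].
Proof.
move=> cov _ [m _ <-]; have [xn|xn] := boolP (x m \in sample x n).
  by right.
by left; split => // i iw ci; exact: cov.
Qed.

End Enumeration.
End Generator.

Local Open Scope ring_scope.

Theorem proposition6p3 (R : realType) (c : R) (hc0 : 0 <= c) (hc1 : c <= 1)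
    (C : set (set nat)) (hC : collection C) :
  exists G : seq nat -> set nat,
    set_generator G /\
    generates_in_limit c C G /\
    achieves_upper_density c (1 - c) C G.
Proof.
have [/pcard_surjP [L surjL] _] := hC.
exists (generator L); split; first exact: generator_fresh.
split=> K CK x [Khat [KhatK [_ [xKhat [Khatx dens]]]]].
all: have [z _ LzK] := surjL K CK.
all: have Lzx m : L z (x m) by rewrite LzK; exact/KhatK/xKhat.
- have [T _ zw] := level_eventually_gt L x z.
  exists T => n Tn _; rewrite -LzK; exact: generator_sub (zw n Tn) Lzx.
- apply: limn_esup_ge_often => N.
  have [n Nn cov] := level_consistent_often L x N.+1.
  exists n.-1; first by rewrite -ltnS (ltn_predK Nn).
  have Khat_range : Khat `<=` range x by move=> y /Khatx [m <-]; exists m.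
  rewrite (ltn_predK Nn).
  exact: mu_low_ge_cover (subset_trans Khat_range (generator_covers cov)) dens.
Qed.
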